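(* Under the standing assumptions (in particular $k\ge\frac{\tau\ln\tau}{\tau-1}$ and $r<r_{cr}$), let $\varphi(s)=r\ln\!\left(1+\frac{p}{1-p}s^k\right)-s$ and $-\beta=\max_{\eta_2\le s\le\eta_3}\varphi(s)$. Then $\beta>0$, and $\Phi(ns)\le\exp\{-(\beta+o(1))m\}$ holds uniformly for all $s\in[\eta_2,\eta_3]$ with $ns$ an integer, as $n\to\infty$.
   Context: Parameters: integer $k\ge2$, constants $\alpha>0$, $r>0$, $0<p<1$; $d=n^{\alpha}$ (treated as an integer), $m=n\ln d$, $\tau=\frac1{1-p}$, $r_{cr}=\frac1{\ln\tau}$. Standing assumptions: $(2k-1)\alpha>1$, $k\alpha\le1$, $k\ge\frac{\tau\ln\tau}{\tau-1}$, and $r<r_{cr}$. Notation: $f(s)=1+\frac{p}{1-p}\cdot\frac{s^k-d^{-k}}{1-d^{-k}}$ for $s\in[0,1]$; $B(S)=\binom{n}{S}\left(\frac1d\right)^{S}\left(1-\frac1d\right)^{n-S}$; $W(S)=f(S/n)^{rm}$; $\Phi(S)=B(S)W(S)$. Let $\alpha_0=\frac{(2k-1)\alpha-1}{2(k-1)}$, and let $\eta_2,\eta_3,\mu$ be constants with $0<\eta_2<\eta_3<1$, $\alpha_0/\alpha-\mu\eta_2^{k-1}>0$, $\mu>\frac{kpr}{1-p}$, and $r\ln(1-p)+\eta_3>0$. *)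

From Stdlib Require Import Reals.
Open Scope R_scope.

(* d = n^alpha, "treated as an integer": we take d_n = floor(n^alpha). *)
Definition dd (alpha : R) (n : nat) : R := IZR (Int_part (Rpower (INR n) alpha)).
Definition mm (alpha : R) (n : nat) : R := INR n * ln (dd alpha n).
Definition tau (p : R) : R := 1 / (1 - p).
Definition r_cr (p : R) : R := 1 / ln (tau p).
Definition alpha0 (k : nat) (alpha : R) : R :=
  ((2 * INR k - 1) * alpha - 1) / (2 * (INR k - 1)).

Definition ff (k : nat) (p d s : R) : R :=
  1 + p / (1 - p) * ((s ^ k - / d ^ k) / (1 - / d ^ k)).

Definition binomR (n S : nat) : R := if Nat.leb S n then Binomial.C n S else 0.

Definition BB (alpha : R) (n S : nat) : R :=
  binomR n S * (/ dd alpha n) ^ S * (1 - / dd alpha n) ^ (n - S).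
Definition WW (k : nat) (alpha r p : R) (n S : nat) : R :=
  Rpower (ff k p (dd alpha n) (INR S / INR n)) (r * mm alpha n).
Definition PPhi (k : nat) (alpha r p : R) (n S : nat) : R :=
  BB alpha n S * WW k alpha r p n S.

Definition varphi (k : nat) (r p s : R) : R :=
  r * ln (1 + p / (1 - p) * s ^ k) - s.

From Stdlib Require Import Reals Lra Lia.
From Coquelicot Require Import Coquelicot.
Open Scope R_scope.

(* The heart of the proof is the elementary inequality
       1 + (e^L - 1) s^k <= e^{sL}      (0 < s <= 1),
   valid whenever k (1 - e^{-L}) >= L.  It follows from a mean-value argument
   on E(x) = ln (e^{xL} - 1) - k ln x, whose derivative is nonpositive by the
   convexity of exp.  With L = ln tau we have e^L - 1 = p/(1-p) and
   1 - e^{-L} = p, so the assumption k >= tau ln tau / (tau - 1) is exactly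
   k (1 - e^{-L}) >= L, giving varphi(s) <= (r ln tau - 1) s < 0 when
   r < r_cr; hence beta > 0.
   For the asymptotic bound we estimate B(S) <= 2^n d^{-S} = e^{n ln 2 - s m}
   and, once d^{-1} <= s, W(S) <= e^{r m ln (1 + p/(1-p) s^k)}; so
   Phi(S) <= exp (n ln 2 + m varphi(s)).  As d = floor (n^alpha) -> oo, the
   term n ln 2 = m ln 2 / ln d is eventually below eps m. *)

Lemma exp_above_tangent (a z : R) : exp a * (1 + (z - a)) <= exp z.
Proof.
  replace (exp z) with (exp a * exp (z - a)) by (rewrite <- exp_plus; f_equal; ring).
  apply Rmult_le_compat_l; [left; apply exp_pos | apply exp_ineq1_le].
Qed.

Lemma exp_neg_below_chord (x L : R) : 0 < L -> 0 <= x <= L ->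
  exp (- x) <= (1 - x / L) + (x / L) * exp (- L).
Proof.
  intros HL Hx.
  set (t := x / L).
  assert (Ht : 0 <= t <= 1).
  { unfold t; split; [apply Rdiv_le_0_compat; lra|].
    apply (Rmult_le_reg_r L); [lra|]. unfold Rdiv; rewrite Rmult_assoc, Rinv_l; lra. }
  assert (Hx' : x = t * L) by (unfold t; field; lra).
  pose proof (exp_above_tangent (- x) 0) as H0.
  pose proof (exp_above_tangent (- x) (- L)) as HL'.
  rewrite exp_0 in H0.
  assert (E : exp (- x) = (1 - t) * (exp (- x) * (1 + (0 - - x)))
                          + t * (exp (- x) * (1 + (- L - - x)))) by (rewrite Hx'; ring).
  rewrite E.
  assert ((1 - t) * (exp (- x) * (1 + (0 - - x))) <= (1 - t) * 1)
    by (apply Rmult_le_compat_l; lra).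
  assert (t * (exp (- x) * (1 + (- L - - x))) <= t * exp (- L))
    by (apply Rmult_le_compat_l; lra).
  fold t. lra.
Qed.

(* If K (1 - e^{-L}) >= L, then x <= K (1 - e^{-x}) on the whole of (0, L]:
   the chord bound makes 1 - e^{-x} at least proportional to x. *)
Lemma le_mult_one_minus_exp (K L x : R) : 0 < L -> K * (1 - exp (- L)) >= L ->
  0 < x <= L -> x <= K * (1 - exp (- x)).
Proof.
  intros HL HK Hx.
  pose proof (exp_neg_below_chord x L HL ltac:(lra)) as Hchord.
  assert (HeL : exp (- L) < 1) by (rewrite <- exp_0; apply exp_increasing; lra).
  assert (HK0 : 0 < K).
  { destruct (Rle_or_lt K 0) as [HK0|HK0]; [|exact HK0].
    assert (K * (1 - exp (- L)) <= 0) by nra. lra. }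
  assert (Ht : 0 <= x / L) by (apply Rdiv_le_0_compat; lra).
  assert (K * (1 - exp (- x)) >= (x / L) * (K * (1 - exp (- L)))) by nra.
  assert ((x / L) * (K * (1 - exp (- L))) >= (x / L) * L) by nra.
  replace (x / L * L) with x in * by (field; lra). lra.
Qed.

(* The key analytic inequality: if k (1 - e^{-L}) >= L, then
   1 + (e^L - 1) s^k <= e^{sL} on (0, 1].  Writing E(x) = ln (e^{xL} - 1) - k ln x,
   the previous lemma says E' <= 0 on (0, 1], so E(s) >= E(1) = ln (e^L - 1). *)
Lemma one_plus_pow_le_exp (k : nat) (L s : R) : 0 < L ->
  INR k * (1 - exp (- L)) >= L -> 0 < s <= 1 ->
  1 + (exp L - 1) * s ^ k <= exp (s * L).
Proof.
  intros HL HK Hs.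
  destruct (Req_dec s 1) as [->|Hs1]; [rewrite pow1, Rmult_1_l; lra|].
  set (K := INR k) in *.
  set (E := fun x => ln (exp (x * L) - 1) - K * ln x).
  set (E' := fun x => L * exp (x * L) / (exp (x * L) - 1) - K / x).
  assert (Hpos : forall x, 0 < x -> 0 < exp (x * L) - 1).
  { intros x Hx. assert (1 < exp (x * L)) by (rewrite <- exp_0; apply exp_increasing; nra).
    lra. }
  destruct (MVT_cor2 E E' s 1) as [c [HMVT Hc]]; [lra| |].
  { intros c Hc. apply is_derive_Reals. unfold E, E'.
    pose proof (Hpos c ltac:(lra)).
    auto_derive; [repeat split; lra|]. field; lra. }
  assert (HE' : E' c <= 0).
  { pose proof (Hpos c ltac:(lra)) as Hp.
    assert (Hx : c * L <= K * (1 - exp (- (c * L))))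
      by (apply (le_mult_one_minus_exp K L); [exact HL | exact HK | split; nra]).
    unfold E'. rewrite exp_Ropp in Hx.
    set (e := exp (c * L)) in *.
    assert (He : 0 < e) by apply exp_pos.
    assert (c * L * e <= K * (e - 1)).
    { replace (K * (e - 1)) with (K * (1 - / e) * e) by (field; lra). nra. }
    replace (L * e / (e - 1) - K / c) with ((c * L * e - K * (e - 1)) / (c * (e - 1)))
      by (field; lra).
    apply Rmult_le_0_r; [lra|]. left; apply Rinv_0_lt_compat; nra. }
  assert (HE : E 1 <= E s) by nra.
  unfold E in HE. rewrite ln_1, Rmult_1_l, Rmult_0_r, Rminus_0_r in HE.
  assert (Hq : 0 < exp L - 1) by (pose proof (Hpos 1 ltac:(lra)); rewrite Rmult_1_l in *; lra).
  assert (Hsk : 0 < s ^ k) by (apply pow_lt; lra).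
  assert (Hln : ln ((exp L - 1) * s ^ k) <= ln (exp (s * L) - 1))
    by (rewrite ln_mult, ln_pow by lra; fold K; lra).
  destruct (Rle_or_lt ((exp L - 1) * s ^ k) (exp (s * L) - 1)) as [|Hlt]; [lra|].
  pose proof (ln_increasing _ _ (Hpos s ltac:(lra)) Hlt). lra.
Qed.
Lemma tau_gt_1 (p : R) : 0 < p < 1 -> 1 < tau p.
Proof.
  intros Hp. unfold tau. apply (Rmult_lt_reg_r (1 - p)); [lra|]. field_simplify; lra.
Qed.

Lemma ln_tau_pos (p : R) : 0 < p < 1 -> 0 < ln (tau p).
Proof. intros Hp. rewrite <- ln_1. apply ln_increasing; [lra | apply tau_gt_1; exact Hp]. Qed.

Lemma exp_ln_tau_sub_1 (p : R) : 0 < p < 1 -> exp (ln (tau p)) - 1 = p / (1 - p).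
Proof.
  intros Hp. rewrite exp_ln by (pose proof (tau_gt_1 p Hp); lra). unfold tau. field; lra.
Qed.

Lemma one_sub_exp_neg_ln_tau (p : R) : 0 < p < 1 -> 1 - exp (- ln (tau p)) = p.
Proof.
  intros Hp. rewrite exp_Ropp, exp_ln by (pose proof (tau_gt_1 p Hp); lra).
  unfold tau. field; lra.
Qed.

Lemma threshold_condition (k : nat) (p : R) : 0 < p < 1 ->
  INR k >= tau p * ln (tau p) / (tau p - 1) ->
  INR k * (1 - exp (- ln (tau p))) >= ln (tau p).
Proof.
  intros Hp Hk. rewrite one_sub_exp_neg_ln_tau by exact Hp.
  replace (tau p * ln (tau p) / (tau p - 1)) with (ln (tau p) / p) in Hk
    by (unfold tau; field; lra).
  apply Rle_ge. apply (Rmult_le_reg_r (/ p)); [apply Rinv_0_lt_compat; lra|].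
  replace (INR k * p * / p) with (INR k) by (field; lra). unfold Rdiv in Hk; lra.
Qed.

Lemma ln_one_plus_pow_le (k : nat) (p s : R) : 0 < p < 1 ->
  INR k >= tau p * ln (tau p) / (tau p - 1) -> 0 < s <= 1 ->
  ln (1 + p / (1 - p) * s ^ k) <= s * ln (tau p).
Proof.
  intros Hp Hk Hs.
  rewrite <- (exp_ln_tau_sub_1 p Hp), <- (ln_exp (s * ln (tau p))).
  pose proof (ln_tau_pos p Hp) as HL.
  apply ln_le.
  - assert (0 <= s ^ k) by (apply pow_le; lra).
    assert (0 < exp (ln (tau p)) - 1) by (rewrite exp_ln_tau_sub_1 by exact Hp;
      apply Rdiv_lt_0_compat; lra).
    nra.
  - apply one_plus_pow_le_exp; [exact HL | apply threshold_condition; assumption | exact Hs].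
Qed.

Lemma varphi_neg (k : nat) (r p s : R) : 0 < r -> 0 < p < 1 ->
  INR k >= tau p * ln (tau p) / (tau p - 1) -> r < r_cr p -> 0 < s <= 1 ->
  varphi k r p s < 0.
Proof.
  intros Hr Hp Hk Hrc Hs.
  pose proof (ln_tau_pos p Hp) as HL.
  assert (HrL : r * ln (tau p) < 1).
  { unfold r_cr in Hrc. apply (Rmult_lt_compat_r (ln (tau p))) in Hrc; [|exact HL].
    replace (1 / ln (tau p) * ln (tau p)) with 1 in Hrc by (field; lra). exact Hrc. }
  pose proof (ln_one_plus_pow_le k p s Hp Hk Hs) as Hln.
  unfold varphi.
  assert (r * ln (1 + p / (1 - p) * s ^ k) <= r * (s * ln (tau p)))
    by (apply Rmult_le_compat_l; lra).
  nra.
Qed.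
Lemma exp_le_compat (x y : R) : x <= y -> exp x <= exp y.
Proof. intros [H|H]; [left; apply exp_increasing; exact H | rewrite H; lra]. Qed.

Lemma inv_in_unit_interval (d : R) : 1 < d -> 0 < / d < 1.
Proof.
  intros Hd. split; [apply Rinv_0_lt_compat; lra|].
  rewrite <- Rinv_1. apply Rinv_lt_contravar; lra.
Qed.

Lemma term_le_sum (F : nat -> R) (n S : nat) : (forall i, 0 <= F i) -> (S <= n)%nat ->
  F S <= sum_f_R0 F n.
Proof.
  intros HF. induction n as [|n IH]; intros HS.
  - replace S with 0%nat by lia. simpl; lra.
  - simpl. destruct (Nat.eq_dec S (Datatypes.S n)) as [->|Hne].
    + pose proof (cond_pos_sum F n HF). lra.
    + pose proof (IH ltac:(lia)). pose proof (HF (Datatypes.S n)). lra.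
Qed.

Lemma binomial_nonneg (n i : nat) : 0 <= Binomial.C n i.
Proof.
  unfold Binomial.C. left. apply Rdiv_lt_0_compat; [apply INR_fact_lt_0|].
  apply Rmult_lt_0_compat; apply INR_fact_lt_0.
Qed.

(* C(n, S) <= 2^n, from the binomial expansion of (1 + 1)^n. *)
Lemma binomial_le_pow2 (n S : nat) : (S <= n)%nat -> Binomial.C n S <= 2 ^ n.
Proof.
  intros HS. replace 2 with (1 + 1) by lra. rewrite binomial.
  rewrite (sum_eq _ (fun i => Binomial.C n i)) by (intros; rewrite !pow1; ring).
  apply (term_le_sum (fun i => Binomial.C n i)); [apply binomial_nonneg | exact HS].
Qed.

Lemma BB_le (alpha : R) (n S : nat) : 1 < dd alpha n -> (S <= n)%nat ->
  BB alpha n S <= 2 ^ n * (/ dd alpha n) ^ S.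
Proof.
  intros Hd HS. unfold BB, binomR. rewrite (proj2 (Nat.leb_le S n) HS).
  set (d := dd alpha n) in *.
  pose proof (inv_in_unit_interval d Hd) as Hinv.
  assert (H1 : 0 <= (1 - / d) ^ (n - S) <= 1).
  { split; [apply pow_le; lra|].
    apply Rle_trans with (1 ^ (n - S)); [apply pow_incr; lra | rewrite pow1; lra]. }
  assert (H2 : 0 <= (/ d) ^ S) by (apply pow_le; lra).
  pose proof (binomial_le_pow2 n S HS). pose proof (binomial_nonneg n S).
  assert (Binomial.C n S * (/ d) ^ S <= 2 ^ n * (/ d) ^ S) by (apply Rmult_le_compat_r; lra).
  assert (0 <= Binomial.C n S * (/ d) ^ S) by nra.
  nra.
Qed.

Lemma BB_nonneg (alpha : R) (n S : nat) : 1 < dd alpha n -> (S <= n)%nat ->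
  0 <= BB alpha n S.
Proof.
  intros Hd HS. unfold BB, binomR. rewrite (proj2 (Nat.leb_le S n) HS).
  pose proof (binomial_nonneg n S). pose proof (inv_in_unit_interval _ Hd).
  apply Rmult_le_pos; [apply Rmult_le_pos|]; try apply pow_le; lra.
Qed.

Lemma ff_bounds (k : nat) (p d s : R) : (0 < k)%nat -> 0 < p < 1 -> 1 < d ->
  / d <= s <= 1 -> 0 < ff k p d s <= 1 + p / (1 - p) * s ^ k.
Proof.
  intros Hk Hp Hd Hs.
  pose proof (inv_in_unit_interval d Hd) as Hinv.
  assert (Ha : 0 < / d ^ k < 1).
  { rewrite <- pow_inv. split; [apply pow_lt; lra|].
    apply pow_lt_1_compat; [lra | exact Hk]. }
  assert (Hat : / d ^ k <= s ^ k) by (rewrite <- pow_inv; apply pow_incr; lra).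
  assert (Ht1 : s ^ k <= 1) by (rewrite <- (pow1 k); apply pow_incr; lra).
  unfold ff. set (a := / d ^ k) in *. set (t := s ^ k) in *.
  assert (Hf0 : 0 <= (t - a) / (1 - a)) by (apply Rdiv_le_0_compat; lra).
  assert (Hf1 : (t - a) / (1 - a) <= t).
  { apply (Rmult_le_reg_r (1 - a)); [lra|].
    replace ((t - a) / (1 - a) * (1 - a)) with (t - a) by (field; lra). nra. }
  assert (Hq : 0 < p / (1 - p)) by (apply Rdiv_lt_0_compat; lra).
  split; nra.
Qed.

(* Combining both bounds: with s = S/n in [d^{-1}, 1],
   Phi(S) <= exp (n ln 2 + m varphi(s)), since d^{-S} = e^{-s m}. *)
Lemma PPhi_le_exp_varphi (k : nat) (alpha r p : R) (n S : nat) :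
  (0 < k)%nat -> 0 <= r -> 0 < p < 1 -> (0 < n)%nat -> 1 < dd alpha n ->
  / dd alpha n <= INR S / INR n <= 1 ->
  PPhi k alpha r p n S <=
  exp (INR n * ln 2 + mm alpha n * varphi k r p (INR S / INR n)).
Proof.
  intros Hk Hr Hp Hn Hd Hs.
  assert (Hn0 : 0 < INR n) by (apply lt_0_INR; exact Hn).
  set (d := dd alpha n) in *. set (s := INR S / INR n) in *.
  assert (HsS : INR S = s * INR n) by (unfold s; field; lra).
  assert (HSn : (S <= n)%nat) by (apply INR_le; nra).
  assert (Hm : mm alpha n = INR n * ln d) by reflexivity.
  assert (Hlnd : 0 < ln d) by (rewrite <- ln_1; apply ln_increasing; lra).
  assert (HB : BB alpha n S <= exp (INR n * ln 2) * exp (- (s * mm alpha n))).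
  { replace (exp (INR n * ln 2)) with (2 ^ n)
      by (rewrite <- ln_pow by lra; rewrite exp_ln; [reflexivity | apply pow_lt; lra]).
    replace (exp (- (s * mm alpha n))) with ((/ d) ^ S).
    - apply BB_le; assumption.
    - rewrite <- (exp_ln ((/ d) ^ S)) by (apply pow_lt, Rinv_0_lt_compat; lra).
      f_equal. rewrite ln_pow, ln_Rinv by (try apply Rinv_0_lt_compat; lra).
      rewrite HsS, Hm. ring. }
  assert (HW : WW k alpha r p n S <= exp (r * mm alpha n * ln (1 + p / (1 - p) * s ^ k))).
  { unfold WW, Rpower. fold d s. apply exp_le_compat.
    destruct (ff_bounds k p d s Hk Hp Hd Hs) as [Hf0 Hf1].
    apply Rmult_le_compat_l; [|apply ln_le; assumption].
    rewrite Hm. apply Rmult_le_pos; [lra | apply Rmult_le_pos; lra]. }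
  assert (HW0 : 0 <= WW k alpha r p n S) by (left; apply exp_pos).
  pose proof (BB_nonneg alpha n S Hd HSn) as HB0.
  unfold PPhi.
  eapply Rle_trans; [apply Rmult_le_compat; [exact HB0 | exact HW0 | exact HB | exact HW]|].
  rewrite <- !exp_plus. apply exp_le_compat. unfold varphi. lra.
Qed.

Lemma dd_eventually_gt (alpha D : R) : 0 < alpha -> 0 < D ->
  exists N : nat, (0 < N)%nat /\ forall n : nat, (N <= n)%nat -> D < dd alpha n.
Proof.
  intros Ha HD.
  set (X := exp (ln (D + 1) / alpha)).
  assert (HX : 0 < X) by apply exp_pos.
  destruct (archimed_cor1 (/ X)) as [N [HNinv HN]]; [apply Rinv_0_lt_compat; exact HX|].
  assert (HNX : X < INR N).
  { assert (0 < INR N) by (apply lt_0_INR; exact HN).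
    rewrite <- (Rinv_inv X), <- (Rinv_inv (INR N)).
    apply Rinv_lt_contravar; [apply Rmult_lt_0_compat; apply Rinv_0_lt_compat; lra | exact HNinv]. }
  exists N. split; [exact HN|]. intros n HnN.
  assert (Hn : X < INR n) by (pose proof (le_INR _ _ HnN); lra).
  assert (Hpow : D + 1 < Rpower (INR n) alpha).
  { unfold Rpower. rewrite <- (exp_ln (D + 1)) by lra. apply exp_increasing.
    assert (Hln : ln X < ln (INR n)) by (apply ln_increasing; assumption).
    unfold X in Hln. rewrite ln_exp in Hln.
    apply (Rmult_lt_compat_l alpha) in Hln; [|exact Ha].
    replace (alpha * (ln (D + 1) / alpha)) with (ln (D + 1)) in Hln by (field; lra). lra. }
  unfold dd. pose proof (base_Int_part (Rpower (INR n) alpha)). lra.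
Qed.

(* Once d exceeds both 1/eta2 and 2^{1/eps}: d > 1, d^{-1} < eta2 (so the
   correction in f is harmless) and ln 2 <= eps ln d (so 2^n <= e^{eps m}). *)
Lemma large_d_facts (eta2 eps d : R) : 0 < eta2 < 1 -> 0 < eps ->
  Rmax (/ eta2) (exp (ln 2 / eps)) < d ->
  1 < d /\ / d < eta2 /\ ln 2 <= eps * ln d.
Proof.
  intros He2 Heps Hd.
  pose proof (Rmax_l (/ eta2) (exp (ln 2 / eps))).
  pose proof (Rmax_r (/ eta2) (exp (ln 2 / eps))).
  assert (Hinv : 1 < / eta2) by (rewrite <- Rinv_1; apply Rinv_lt_contravar; lra).
  split; [lra|]. split.
  - rewrite <- (Rinv_inv eta2). apply Rinv_lt_contravar; [apply Rmult_lt_0_compat|]; lra.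
  - assert (Hln : ln 2 / eps < ln d)
      by (rewrite <- (ln_exp (ln 2 / eps)); apply ln_increasing; [apply exp_pos | lra]).
    replace (ln 2) with (eps * (ln 2 / eps)) at 1 by (field; lra).
    apply Rmult_le_compat_l; lra.
Qed.

Theorem lemma4p8 (k : nat) (alpha r p eta2 eta3 mu : R) :
  (2 <= k)%nat -> 0 < alpha -> 0 < r -> 0 < p < 1 ->
  (2 * INR k - 1) * alpha > 1 -> INR k * alpha <= 1 ->
  INR k >= tau p * ln (tau p) / (tau p - 1) ->
  r < r_cr p ->
  0 < eta2 -> eta2 < eta3 -> eta3 < 1 ->
  alpha0 k alpha / alpha - mu * eta2 ^ (k - 1) > 0 ->
  mu > INR k * p * r / (1 - p) ->
  r * ln (1 - p) + eta3 > 0 ->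
  forall beta : R,
    (exists s, eta2 <= s <= eta3 /\ varphi k r p s = - beta) ->
    (forall s, eta2 <= s <= eta3 -> varphi k r p s <= - beta) ->
    beta > 0 /\
    (forall eps : R, eps > 0 ->
       exists N : nat, forall n S : nat, (N <= n)%nat ->
         eta2 <= INR S / INR n <= eta3 ->
         PPhi k alpha r p n S <= exp (- (beta - eps) * mm alpha n)).
Proof.
  intros Hk Ha Hr Hp _ _ Hthr Hrc He2 He23 He3 _ _ _ beta [s0 [Hs0 Hv0]] Hmax.
  split; [pose proof (varphi_neg k r p s0 Hr Hp Hthr Hrc ltac:(lra)); lra|].
  intros eps Heps.
  pose proof (Rinv_0_lt_compat eta2 He2).
  destruct (dd_eventually_gt alpha (Rmax (/ eta2) (exp (ln 2 / eps)))) as [N [HN HdN]];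
    [exact Ha | pose proof (Rmax_l (/ eta2) (exp (ln 2 / eps))); lra|].
  exists N. intros n S HnN HS.
  destruct (large_d_facts eta2 eps (dd alpha n) ltac:(lra) Heps (HdN n HnN))
    as [Hd1 [Hd_inv Hln2]].
  eapply Rle_trans;
    [apply (PPhi_le_exp_varphi k alpha r p n S); [lia | lra | exact Hp | lia | exact Hd1 | lra]|].
  apply exp_le_compat.
  assert (Hn : 0 < INR n) by (apply lt_0_INR; lia).
  assert (Hlnd : 0 < ln (dd alpha n)) by (rewrite <- ln_1; apply ln_increasing; lra).
  assert (Hm : 0 <= mm alpha n) by (unfold mm; apply Rmult_le_pos; lra).
  assert (mm alpha n * varphi k r p (INR S / INR n) <= mm alpha n * - beta)
    by (apply Rmult_le_compat_l; [exact Hm | apply Hmax; exact HS]).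
  assert (INR n * ln 2 <= eps * mm alpha n) by (unfold mm; nra).
  lra.
Qed.
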